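(* (1) Let $X=(X,\mathcal O(X))$ be a locally super-compact $L$-sober space. Then $\Sigma_L\Omega_LX=(X,\mathcal O(X))$, i.e., the Scott $L$-topology of the specialization $L$-order of $X$ equals $\mathcal O(X)$. (2) Let $(P,e)$ be a continuous $L$-dcpo. Then $\Omega_L\Sigma_L(P,e)=(P,e)$, i.e., the specialization $L$-order of the Scott $L$-topology $\sigma_L(P)$ equals $e$.
   Context: $L$ is a frame with implication $\to$. $L$-subsets: maps to $L$; nonempty: $\bigvee A=1$; ${\rm sub}_X(A,B)=\bigwedge_xA(x)\to B(x)$. $L$-topology: $\mathcal O(X)\subseteq L^X$ closed under finite meets and arbitrary joins containing all constants $a_X$; interior $A^\circ$ is the join of open sets below $A$. Super-compact: nonempty $A$ with ${\rm sub}_X(A,\bigvee_iV_i)=\bigvee_i{\rm sub}_X(A,V_i)$ for all families of open $V_i$; ${\rm SC}(X)$ their set. Locally super-compact: every open $A=\bigvee_{B\in{\rm SC}(X)}{\rm sub}_X(B,A)\wedge B^\circ$. A point of $\mathcal O(X)$: $p:\mathcal O(X)\to L$ preserving binary meets, arbitrary joins, with $p(\lambda_X)=\lambda$; $[x](A)=A(x)$; $L$-sober: $x\mapsto[x]$ bijective onto the points. For a $T_0$ space, $\Omega_LX$ is $X$ with the specialization $L$-order $e(x,y)=\bigwedge_{A\in\mathcal O(X)}A(x)\to A(y)$. For an $L$-ordered set $(P,e)$ ($e(x,x)=1$, $e(x,y)\wedge e(y,z)\le e(x,z)$, $e(x,y)\wedge e(y,x)=1\Rightarrow x=y$): ${\downarrow}y(x)=e(x,y)$;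 $\sqcup A=x$ iff $e(x,y)={\rm sub}_P(A,{\downarrow}y)$ for all $y$; directed: nonempty and $D(x)\wedge D(y)\le\bigvee_zD(z)\wedge e(x,z)\wedge e(y,z)$; ideal: directed lower set; $L$-dcpo: all directed $L$-subsets have suprema; ${\Downarrow}x(y)=\bigwedge\{e(x,\sqcup I)\to I(y):I\text{ ideal with a supremum}\}$; continuous $L$-dcpo: $L$-dcpo with each ${\Downarrow}x$ directed and $\sqcup{\Downarrow}x=x$. Scott $L$-topology $\sigma_L(P)$: upper sets $A$ ($A(x)\wedge e(x,y)\le A(y)$) with $A(\sqcup D)=\bigvee_xA(x)\wedge D(x)$ for every directed $D$ having a supremum; $\Sigma_LP=(P,\sigma_L(P))$. *)

Set Implicit Arguments.
Unset Strict Implicit.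

Record frame := Frame {
  car :> Type;
  fle : car -> car -> Prop;
  fle_refl : forall a, fle a a;
  fle_trans : forall a b c, fle a b -> fle b c -> fle a c;
  fle_antisym : forall a b, fle a b -> fle b a -> a = b;
  fsup : (car -> Prop) -> car;
  fsup_ub : forall (S : car -> Prop) a, S a -> fle a (fsup S);
  fsup_least : forall (S : car -> Prop) b, (forall a, S a -> fle a b) -> fle (fsup S) b;
  fmeet : car -> car -> car;
  fmeet_lb1 : forall a b, fle (fmeet a b) a;
  fmeet_lb2 : forall a b, fle (fmeet a b) b;
  fmeet_glb : forall a b c, fle c a -> fle c b -> fle c (fmeet a b);
  fdistr : forall a (S : car -> Prop),
    fmeet a (fsup S) = fsup (fun y => exists x, S x /\ y = fmeet a x)
}.

Section FrameOps.
Variable L : frame.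
Definition bigjoin (I : Type) (f : I -> L) : L := fsup (fun y => exists i, y = f i).
Definition bigmeet (I : Type) (f : I -> L) : L :=
  fsup (fun c => forall i, fle c (f i)).
Definition ftop : L := fsup (fun _ => True).
Definition fimp (a b : L) : L := fsup (fun c => fle (fmeet c a) b).
End FrameOps.

Section LSubsets.
Variable L : frame.
Variable X : Type.
Definition Lsubset := X -> L.
Definition const (a : L) : Lsubset := fun _ => a.
Definition Lnonempty (A : Lsubset) : Prop := bigjoin A = ftop L.
Definition subX (A B : Lsubset) : L := bigmeet (fun x => fimp (A x) (B x)).
Definition Ljoin (I : Type) (V : I -> Lsubset) : Lsubset := fun x => bigjoin (fun i => V i x).
Definition Lmeet (A B : Lsubset) : Lsubset := fun x => fmeet (A x) (B x).
Definition Lle (A B : Lsubset) : Prop := forall x, fle (A x) (B x).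
End LSubsets.

Section LTop.
Variable L : frame.
Variable X : Type.
Definition is_Ltopology (O : (X -> L) -> Prop) : Prop :=
  (forall A B, O A -> O B -> O (Lmeet A B)) /\
  (forall (I : Type) (V : I -> X -> L), (forall i, O (V i)) -> O (Ljoin V)) /\
  (forall a : L, O (@const L X a)).

Variable O : (X -> L) -> Prop.

Definition interior (A : X -> L) : X -> L :=
  Ljoin (fun B : {B : X -> L | O B /\ Lle B A} => proj1_sig B).

Definition super_compact (A : X -> L) : Prop :=
  Lnonempty A /\
  forall (I : Type) (V : I -> X -> L), (forall i, O (V i)) ->
    subX A (Ljoin V) = bigjoin (fun i => subX A (V i)).

Definition locally_super_compact : Prop :=
  forall A, O A ->
    A = Ljoin (fun B : {B : X -> L | super_compact B} =>
                 Lmeet (@const L X (subX (proj1_sig B) A)) (interior (proj1_sig B))).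

Definition is_point (p : (X -> L) -> L) : Prop :=
  (forall A B, O A -> O B -> p (Lmeet A B) = fmeet (p A) (p B)) /\
  (forall (I : Type) (V : I -> X -> L), (forall i, O (V i)) ->
     p (Ljoin V) = bigjoin (fun i => p (V i))) /\
  (forall a : L, p (@const L X a) = a).

(* [x](A) = A(x); L-sober: x |-> [x] is a bijection onto the points
   (maps on O(X) are identified when they agree on all open L-subsets). *)
Definition L_sober : Prop :=
  (forall x y : X, (forall A, O A -> A x = A y) -> x = y) /\
  (forall p, is_point p -> exists x : X, forall A, O A -> p A = A x).

Definition spec_order (x y : X) : L :=
  bigmeet (fun A : {A : X -> L | O A} => fimp (proj1_sig A x) (proj1_sig A y)).
End LTop.

Section LOrder.
Variable L : frame.
Variable P : Type.
Variable e : P -> P -> L.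

Definition is_Lorder : Prop :=
  (forall x, e x x = ftop L) /\
  (forall x y z, fle (fmeet (e x y) (e y z)) (e x z)) /\
  (forall x y, fmeet (e x y) (e y x) = ftop L -> x = y).

Definition down (y : P) : P -> L := fun x => e x y.

Definition is_sup (A : P -> L) (x : P) : Prop :=
  forall y, e x y = subX A (down y).

Definition directed (D : P -> L) : Prop :=
  Lnonempty D /\
  forall x y, fle (fmeet (D x) (D y))
                  (bigjoin (fun z => fmeet (D z) (fmeet (e x z) (e y z)))).

Definition lower_set (A : P -> L) : Prop :=
  forall x y, fle (fmeet (A y) (e x y)) (A x).
Definition upper_set (A : P -> L) : Prop :=
  forall x y, fle (fmeet (A x) (e x y)) (A y).

Definition ideal (I : P -> L) : Prop := directed I /\ lower_set I.

Definition L_dcpo : Prop :=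
  is_Lorder /\ forall D, directed D -> exists x, is_sup D x.

Definition waybelow (x : P) : P -> L := fun y =>
  bigmeet (fun Is : {Is : (P -> L) * P | ideal (fst Is) /\ is_sup (fst Is) (snd Is)} =>
    fimp (e x (snd (proj1_sig Is))) (fst (proj1_sig Is) y)).

Definition continuous_L_dcpo : Prop :=
  L_dcpo /\ forall x, directed (waybelow x) /\ is_sup (waybelow x) x.

Definition scott_open (A : P -> L) : Prop :=
  upper_set A /\
  forall D s, directed D -> is_sup D s ->
    A s = bigjoin (fun x => fmeet (A x) (D x)).
End LOrder.

From Stdlib Require Import FunctionalExtensionality.
Set Implicit Arguments.
Unset Strict Implicit.

(* Frame inequalities are proved on lower elements: [a <= b] iff every
   [c <= a] is below [b], and by distributivity a hypothesis [c <= \/S] may be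
   used through the elements [d <= c /\ s] with [s] in [S].

   (1) For directed [D], the map [V |-> \/_x V(x) /\ D(x)] is a point of
   [O(X)]; sobriety turns it into an element, which is a supremum of [D], so
   every open set is Scott open.  Conversely, sobriety attaches to each
   super-compact [B] the element [y] with [sub_X(B, V) = V(y)]; local
   super-compactness makes [x] the directed supremum of
   [approx y x = \/ { B°(x) : B attached to y }], and the Scott condition then
   writes a Scott open [A] as the open set [\/_y A(y) /\ approx y].

   (2) Scott open sets are upper sets, giving [e <= spec].  By interpolation
   every [x |-> ⇓x(z)] is Scott open, and [x = ⊔⇓x] gives [spec <= e]. *)

Section FrameCalculus.
Variable L : frame.
Implicit Types a b c d t : L.

Lemma fle_meetl c a b : fle c (fmeet a b) -> fle c a.
Proof. intro H; exact (fle_trans H (fmeet_lb1 a b)). Qed.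

Lemma fle_meetr c a b : fle c (fmeet a b) -> fle c b.
Proof. intro H; exact (fle_trans H (fmeet_lb2 a b)). Qed.

Lemma fle_top c : fle c (ftop L).
Proof. apply fsup_ub; exact I. Qed.

Lemma fle_lower a b : (forall c, fle c a -> fle c b) -> fle a b.
Proof. intro H; apply H, fle_refl. Qed.

Lemma eq_lower a b :
  (forall c, fle c a -> fle c b) -> (forall c, fle c b -> fle c a) -> a = b.
Proof. intros H K; apply fle_antisym; apply fle_lower; assumption. Qed.

Lemma fle_bigjoin (I : Type) (f : I -> L) i c : fle c (f i) -> fle c (bigjoin f).
Proof. intro H; apply (fle_trans H), fsup_ub; exists i; reflexivity. Qed.

Lemma fle_bigmeet (I : Type) (f : I -> L) c : (forall i, fle c (f i)) -> fle c (bigmeet f).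
Proof. intro H; apply fsup_ub, H. Qed.

Lemma fle_bigmeetE (I : Type) (f : I -> L) i c : fle c (bigmeet f) -> fle c (f i).
Proof. intro H; apply (fle_trans H), fsup_least; intros a Ha; apply Ha. Qed.

Lemma fle_fsupE (S : L -> Prop) c t : fle c (fsup S) ->
  (forall s d, S s -> fle d c -> fle d s -> fle d t) -> fle c t.
Proof.
  intros H K. apply fle_trans with (fmeet c (fsup S)).
  - exact (fmeet_glb (fle_refl c) H).
  - rewrite fdistr. apply fsup_least. intros y [s [Ss ->]].
    exact (K s _ Ss (fmeet_lb1 c s) (fmeet_lb2 c s)).
Qed.

Lemma fle_bigjoinE (I : Type) (f : I -> L) c t : fle c (bigjoin f) ->
  (forall i d, fle d c -> fle d (f i) -> fle d t) -> fle c t.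
Proof. intros H K; apply (fle_fsupE H); intros s d [i ->]; apply K. Qed.

Lemma fle_fimp a b c : (forall d, fle d c -> fle d a -> fle d b) -> fle c (fimp a b).
Proof. intro H; apply fsup_ub, H; [apply fmeet_lb1 | apply fmeet_lb2]. Qed.

Lemma fle_fimpE a b c : fle c (fimp a b) -> fle c a -> fle c b.
Proof.
  intros H Ha. apply (fle_fsupE H). intros s d Hs Hd Hds.
  exact (fle_trans (fmeet_glb Hds (fle_trans Hd Ha)) Hs).
Qed.
End FrameCalculus.

Arguments fle_bigjoin {L I f} i {c} _.
Arguments fle_bigmeetE {L I f} i {c} _.

Ltac lower_hyps H :=
  match type of H with fle ?d ?c =>
    repeat match goal with K : fle c ?a |- _ => apply (fle_trans H) in K end
  end.

Section LSubsetFacts.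
Variables (L : frame) (X : Type).
Implicit Types A B V W : X -> L.

Lemma fle_nonempty A c : Lnonempty A -> fle c (bigjoin A).
Proof. intro H; rewrite H; apply fle_top. Qed.

Lemma fle_subX A B c :
  (forall x d, fle d c -> fle d (A x) -> fle d (B x)) -> fle c (subX A B).
Proof. intro H; apply fle_bigmeet; intro x; apply fle_fimp, H. Qed.

Lemma fle_subXE A B x c : fle c (subX A B) -> fle c (A x) -> fle c (B x).
Proof. intro H; apply fle_fimpE, (fle_bigmeetE x H). Qed.

Lemma subX_const A a : Lnonempty A -> subX A (const a) = a.
Proof.
  intro Hne. apply eq_lower; intros c H.
  - apply (fle_bigjoinE (fle_nonempty c Hne)). intros x d Hd Hx.
    exact (fle_subXE (fle_trans Hd H) Hx).
  - apply fle_subX. intros x d Hd _. exact (fle_trans Hd H).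
Qed.

Lemma subX_meet A V W : subX A (Lmeet V W) = fmeet (subX A V) (subX A W).
Proof.
  apply eq_lower; intros c H.
  - apply fmeet_glb; apply fle_subX; intros x d Hd Hx;
      pose proof (fle_subXE (fle_trans Hd H) Hx) as HVW;
      [exact (fle_meetl HVW) | exact (fle_meetr HVW)].
  - apply fle_subX; intros x d Hd Hx. apply fmeet_glb.
    + exact (fle_subXE (fle_trans Hd (fle_meetl H)) Hx).
    + exact (fle_subXE (fle_trans Hd (fle_meetr H)) Hx).
Qed.
End LSubsetFacts.

Section LRelation.
Variables (L : frame) (P : Type) (e : P -> P -> L).
Implicit Types (D A : P -> L) (c d : L).

Lemma fle_is_sup D s y c : is_sup e D s ->
  (forall x d, fle d c -> fle d (D x) -> fle d (e x y)) -> fle c (e s y).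
Proof. intros Hs H; rewrite Hs; apply fle_subX, H. Qed.

Lemma fle_is_supE D s x y c : is_sup e D s -> fle c (e s y) -> fle c (D x) -> fle c (e x y).
Proof. intros Hs H; rewrite Hs in H; exact (fle_subXE H). Qed.

Lemma upper_setE A x y c : upper_set e A -> fle c (A x) -> fle c (e x y) -> fle c (A y).
Proof. intros HA Hx Hxy; exact (fle_trans (fmeet_glb Hx Hxy) (HA x y)). Qed.
End LRelation.

Section SpecializationOrder.
Variables (L : frame) (X : Type) (O : (X -> L) -> Prop).
Notation spec := (spec_order O).

Lemma fle_spec_order x y c :
  (forall V, O V -> forall d, fle d c -> fle d (V x) -> fle d (V y)) -> fle c (spec x y).
Proof. intro H; apply fle_bigmeet; intros [V HV]; apply fle_fimp, H, HV. Qed.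

Lemma fle_spec_orderE V x y c : O V -> fle c (V x) -> fle c (spec x y) -> fle c (V y).
Proof. intros HV Hx H; exact (fle_fimpE (fle_bigmeetE (exist O V HV) H) Hx). Qed.

Lemma open_upper_set V : O V -> upper_set spec V.
Proof.
  intros HV x y; apply fle_lower; intros c H.
  exact (fle_spec_orderE HV (fle_meetl H) (fle_meetr H)).
Qed.

Lemma spec_order_refl x : spec x x = ftop L.
Proof.
  apply eq_lower; intros c _; [apply fle_top|].
  apply fle_spec_order; intros V _ d _ Hd; exact Hd.
Qed.

Lemma spec_order_trans x y z : fle (fmeet (spec x y) (spec y z)) (spec x z).
Proof.
  apply fle_lower; intros c H. apply fle_spec_order; intros V HV d Hd Hx. lower_hyps Hd.
  exact (fle_spec_orderE HV (fle_spec_orderE HV Hx (fle_meetl H)) (fle_meetr H)).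
Qed.
End SpecializationOrder.

Section LPreorder.
Variables (L : frame) (P : Type) (e : P -> P -> L).
Hypothesis e_refl : forall x, e x x = ftop L.
Hypothesis e_trans : forall x y z, fle (fmeet (e x y) (e y z)) (e x z).
Implicit Types (D I : P -> L) (c d : L).

Lemma fle_refl_e x c : fle c (e x x).
Proof. rewrite e_refl; apply fle_top. Qed.

Lemma fle_trans_e x y z c : fle c (e x y) -> fle c (e y z) -> fle c (e x z).
Proof. intros H1 H2; exact (fle_trans (fmeet_glb H1 H2) (e_trans x y z)). Qed.

Lemma is_sup_ub D s x c : is_sup e D s -> fle c (D x) -> fle c (e x s).
Proof. intros Hs Hx; exact (fle_is_supE Hs (fle_refl_e s c) Hx). Qed.

Lemma is_sup_le_sup D s t c : is_sup e D s -> is_sup e D t -> fle c (e s t).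
Proof. intros Hs Ht; apply (fle_is_sup Hs); intros x d _ Hx; exact (is_sup_ub Ht Hx). Qed.

Lemma down_ideal x : ideal e (down e x).
Proof.
  split; [split|].
  - apply eq_lower; intros c _; [apply fle_top | apply (fle_bigjoin x), fle_refl_e].
  - intros a b; apply fle_lower; intros c H.
    apply (fle_bigjoin x), fmeet_glb; [apply fle_refl_e | exact H].
  - intros a b; apply fle_lower; intros c H.
    exact (fle_trans_e (fle_meetr H) (fle_meetl H)).
Qed.

Lemma down_sup x : is_sup e (down e x) x.
Proof.
  intro y; apply eq_lower; intros c H.
  - apply fle_subX; intros z d Hd Hz. exact (fle_trans_e Hz (fle_trans Hd H)).
  - exact (fle_subXE (x := x) H (fle_refl_e x c)).
Qed.

Definition lower_closure D (y : P) : L := bigjoin (fun w => fmeet (D w) (e y w)).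

Lemma lower_closure_ideal D : directed e D -> ideal e (lower_closure D).
Proof.
  intros [Hne Hdir]. split; [split|].
  - apply eq_lower; intros c _; [apply fle_top|].
    apply (fle_bigjoinE (fle_nonempty c Hne)); intros w d _ Hw.
    apply (fle_bigjoin w), (fle_bigjoin w), fmeet_glb; [exact Hw | apply fle_refl_e].
  - intros a b; apply fle_lower; intros c H.
    apply (fle_bigjoinE (fle_meetl H)); intros w1 d Hd H1; lower_hyps Hd.
    apply (fle_bigjoinE (fle_meetr H)); intros w2 d' Hd' H2; lower_hyps Hd'.
    apply (fle_bigjoinE (fle_trans (fmeet_glb (fle_meetl H1) (fle_meetl H2)) (Hdir w1 w2))).
    intros z d'' Hd'' Hz; lower_hyps Hd''.
    apply (fle_bigjoin z), fmeet_glb; [|apply fmeet_glb].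
    + apply (fle_bigjoin z), fmeet_glb; [exact (fle_meetl Hz) | apply fle_refl_e].
    + exact (fle_trans_e (fle_meetr H1) (fle_meetl (fle_meetr Hz))).
    + exact (fle_trans_e (fle_meetr H2) (fle_meetr (fle_meetr Hz))).
  - intros x y; apply fle_lower; intros c H.
    apply (fle_bigjoinE (fle_meetl H)); intros w d Hd Hw; lower_hyps Hd.
    apply (fle_bigjoin w), fmeet_glb; [exact (fle_meetl Hw)|].
    exact (fle_trans_e (fle_meetr H) (fle_meetr Hw)).
Qed.

Lemma lower_closure_sup D s : is_sup e D s -> is_sup e (lower_closure D) s.
Proof.
  intros Hs y; apply eq_lower; intros c H.
  - apply fle_subX; intros x d Hd Hx; lower_hyps Hd.
    apply (fle_bigjoinE Hx); intros w d' Hd' Hw; lower_hyps Hd'.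
    exact (fle_trans_e (fle_meetr Hw) (fle_trans_e (is_sup_ub Hs (fle_meetl Hw)) H)).
  - apply (fle_is_sup Hs); intros x d Hd Hx.
    apply (fle_subXE (fle_trans Hd H)).
    apply (fle_bigjoin x), fmeet_glb; [exact Hx | apply fle_refl_e].
Qed.

Lemma waybelow_ideal I s z c :
  ideal e I -> is_sup e I s -> fle c (waybelow e s z) -> fle c (I z).
Proof.
  intros HI Hs H.
  refine (fle_fimpE (fle_bigmeetE (exist _ (I, s) (conj HI Hs)) H) (fle_refl_e _ _)).
Qed.

Lemma waybelow_le x z c : fle c (waybelow e x z) -> fle c (e z x).
Proof. exact (waybelow_ideal (down_ideal x) (down_sup x)). Qed.

Lemma waybelow_upper x y z c :
  fle c (waybelow e x z) -> fle c (e x y) -> fle c (waybelow e y z).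
Proof.
  intros Hz Hxy. apply fle_bigmeet; intro Is; apply fle_fimp; intros d Hd Hys. lower_hyps Hd.
  exact (fle_fimpE (fle_bigmeetE Is Hz) (fle_trans_e Hxy Hys)).
Qed.

Lemma waybelow_lower x y w c :
  fle c (waybelow e x y) -> fle c (e w y) -> fle c (waybelow e x w).
Proof.
  intros Hy Hwy. apply fle_bigmeet; intro Is; apply fle_fimp; intros d Hd Hxs. lower_hyps Hd.
  pose proof (proj2 (proj1 (proj2_sig Is))) as I_lower.
  exact (fle_trans (fmeet_glb (fle_fimpE (fle_bigmeetE Is Hy) Hxs) Hwy) (I_lower w y)).
Qed.
End LPreorder.

Section ContinuousLDcpo.
Variables (L : frame) (P : Type) (e : P -> P -> L).
Hypothesis e_refl : forall x, e x x = ftop L.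
Hypothesis e_trans : forall x y z, fle (fmeet (e x y) (e y z)) (e x z).
Notation wb := (waybelow e).
Hypothesis wb_directed : forall x, directed e (wb x).
Hypothesis wb_sup : forall x, is_sup e (wb x) x.

Definition interpolant (s z : P) : L := bigjoin (fun x => fmeet (wb s x) (wb x z)).

Lemma interpolant_ideal s : ideal e (interpolant s).
Proof.
  split; [split|].
  - apply eq_lower; intros c _; [apply fle_top|].
    apply (fle_bigjoinE (fle_nonempty c (proj1 (wb_directed s)))); intros x d _ Hx.
    apply (fle_bigjoinE (fle_nonempty d (proj1 (wb_directed x)))); intros z d' Hd' Hz.
    lower_hyps Hd'. apply (fle_bigjoin z), (fle_bigjoin x), fmeet_glb; assumption.
  - intros a b; apply fle_lower; intros c H.
    apply (fle_bigjoinE (fle_meetl H)); intros x d Hd Hx; lower_hyps Hd.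
    apply (fle_bigjoinE (fle_meetr H)); intros x' d' Hd' Hx'; lower_hyps Hd'.
    apply (fle_bigjoinE (fle_trans (fmeet_glb (fle_meetl Hx) (fle_meetl Hx'))
                                   (proj2 (wb_directed s) x x'))).
    intros w d'' Hd'' Hw; lower_hyps Hd''.
    assert (Ha : fle d'' (wb w a))
      by exact (waybelow_upper e_trans (fle_meetr Hx) (fle_meetl (fle_meetr Hw))).
    assert (Hb : fle d'' (wb w b))
      by exact (waybelow_upper e_trans (fle_meetr Hx') (fle_meetr (fle_meetr Hw))).
    apply (fle_bigjoinE (fle_trans (fmeet_glb Ha Hb) (proj2 (wb_directed w) a b))).
    intros z d3 Hd3 Hz; lower_hyps Hd3.
    apply (fle_bigjoin z), fmeet_glb; [|exact (fle_meetr Hz)].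
    apply (fle_bigjoin w), fmeet_glb; [exact (fle_meetl Hw) | exact (fle_meetl Hz)].
  - intros x y; apply fle_lower; intros c H.
    apply (fle_bigjoinE (fle_meetl H)); intros w d Hd Hw; lower_hyps Hd.
    apply (fle_bigjoin w), fmeet_glb; [exact (fle_meetl Hw)|].
    exact (waybelow_lower (fle_meetr Hw) (fle_meetr H)).
Qed.

Lemma interpolant_sup s : is_sup e (interpolant s) s.
Proof.
  intro y; apply eq_lower; intros c H.
  - apply fle_subX; intros z d Hd Hz; lower_hyps Hd.
    apply (fle_bigjoinE Hz); intros x d' Hd' Hx; lower_hyps Hd'.
    apply (fle_trans_e e_trans (waybelow_le e_refl e_trans (fle_meetr Hx))).
    exact (fle_trans_e e_trans (waybelow_le e_refl e_trans (fle_meetl Hx)) H).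
  - apply (fle_is_sup (wb_sup s)); intros x d Hd Hx.
    apply (fle_is_sup (wb_sup x)); intros z d' Hd' Hz; lower_hyps Hd'.
    apply (fle_subXE (fle_trans Hd H)).
    apply (fle_bigjoin x), fmeet_glb; assumption.
Qed.

Lemma waybelow_interpolate s z c : fle c (wb s z) -> fle c (interpolant s z).
Proof. exact (waybelow_ideal e_refl (interpolant_ideal s) (interpolant_sup s)). Qed.

Lemma waybelow_scott_open z : scott_open e (fun x => wb x z).
Proof.
  split.
  - intros x y; apply fle_lower; intros c H.
    exact (waybelow_upper e_trans (fle_meetl H) (fle_meetr H)).
  - intros D s HD Hs; apply eq_lower; intros c H.
    + (* interpolate [z << x << s]; then [x << s = ⊔D] puts [x] below a member of [D] *)
      apply (fle_bigjoinE (waybelow_interpolate H)); intros x d Hd Hx; lower_hyps Hd.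
      pose proof (waybelow_ideal e_refl (lower_closure_ideal e_refl e_trans HD)
                    (lower_closure_sup e_refl e_trans Hs) (fle_meetl Hx)) as Hxw.
      apply (fle_bigjoinE Hxw); intros w d' Hd' Hw; lower_hyps Hd'.
      apply (fle_bigjoin w), fmeet_glb; [|exact (fle_meetl Hw)].
      exact (waybelow_upper e_trans (fle_meetr Hx) (fle_meetr Hw)).
    + apply (fle_bigjoinE H); intros x d _ Hx.
      exact (waybelow_upper e_trans (fle_meetl Hx) (is_sup_ub e_refl Hs (fle_meetr Hx))).
Qed.

Lemma spec_order_scott x y : spec_order (scott_open e) x y = e x y.
Proof.
  apply eq_lower; intros c H.
  - apply (fle_is_sup (wb_sup x)); intros z d Hd Hz.
    apply (waybelow_le e_refl e_trans).
    exact (fle_spec_orderE (waybelow_scott_open z) Hz (fle_trans Hd H)).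
  - apply fle_spec_order; intros A [A_upper _] d Hd Hx.
    exact (upper_setE A_upper Hx (fle_trans Hd H)).
Qed.
End ContinuousLDcpo.

Section SoberSpace.
Variables (L : frame) (X : Type) (O : (X -> L) -> Prop).
Hypothesis O_sober : L_sober O.
Notation spec := (spec_order O).
Implicit Types (A B D V : X -> L) (c d : L).

Lemma spec_order_T0 s t : fle (ftop L) (spec s t) -> fle (ftop L) (spec t s) -> s = t.
Proof.
  intros Hst Hts. apply (proj1 O_sober); intros A HA; apply eq_lower; intros c H.
  - exact (fle_spec_orderE HA H (fle_trans (fle_top c) Hst)).
  - exact (fle_spec_orderE HA H (fle_trans (fle_top c) Hts)).
Qed.

Definition directed_point D V : L := bigjoin (fun x => fmeet (V x) (D x)).

Lemma directed_point_meet D V W : directed spec D -> O V -> O W ->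
  directed_point D (Lmeet V W) = fmeet (directed_point D V) (directed_point D W).
Proof.
  intros [_ Hdir] HV HW; apply eq_lower; intros c H.
  - apply (fle_bigjoinE H); intros x d _ Hx.
    apply fmeet_glb; apply (fle_bigjoin x), fmeet_glb.
    + exact (fle_meetl (fle_meetl Hx)).
    + exact (fle_meetr Hx).
    + exact (fle_meetr (fle_meetl Hx)).
    + exact (fle_meetr Hx).
  - apply (fle_bigjoinE (fle_meetl H)); intros x d Hd Hx; lower_hyps Hd.
    apply (fle_bigjoinE (fle_meetr H)); intros y d' Hd' Hy; lower_hyps Hd'.
    apply (fle_bigjoinE (fle_trans (fmeet_glb (fle_meetr Hx) (fle_meetr Hy)) (Hdir x y))).
    intros z d'' Hd'' Hz; lower_hyps Hd''.
    apply (fle_bigjoin z), fmeet_glb; [apply fmeet_glb | exact (fle_meetl Hz)].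
    + exact (fle_spec_orderE HV (fle_meetl Hx) (fle_meetl (fle_meetr Hz))).
    + exact (fle_spec_orderE HW (fle_meetl Hy) (fle_meetr (fle_meetr Hz))).
Qed.

Lemma directed_point_join D (I : Type) (V : I -> X -> L) :
  directed_point D (Ljoin V) = bigjoin (fun i => directed_point D (V i)).
Proof.
  apply eq_lower; intros c H.
  - apply (fle_bigjoinE H); intros x d _ Hx.
    apply (fle_bigjoinE (fle_meetl Hx)); intros i d' Hd' Hi; lower_hyps Hd'.
    apply (fle_bigjoin i), (fle_bigjoin x), fmeet_glb; [exact Hi | exact (fle_meetr Hx)].
  - apply (fle_bigjoinE H); intros i d _ Hi.
    apply (fle_bigjoinE Hi); intros x d' _ Hx.
    apply (fle_bigjoin x), fmeet_glb; [apply (fle_bigjoin i), (fle_meetl Hx) | exact (fle_meetr Hx)].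
Qed.

Lemma directed_point_const D a : Lnonempty D -> directed_point D (const a) = a.
Proof.
  intro Hne; apply eq_lower; intros c H.
  - apply (fle_bigjoinE H); intros x d _ Hx; exact (fle_meetl Hx).
  - apply (fle_bigjoinE (fle_nonempty c Hne)); intros x d Hd Hx.
    apply (fle_bigjoin x), fmeet_glb; [exact (fle_trans Hd H) | exact Hx].
Qed.

Lemma directed_point_is_point D : directed spec D -> is_point O (directed_point D).
Proof.
  intro HD; split; [|split].
  - intros V W; exact (directed_point_meet HD).
  - intros I V _; apply directed_point_join.
  - intro a; exact (directed_point_const a (proj1 HD)).
Qed.

Lemma directed_point_sup D t :
  (forall V, O V -> directed_point D V = V t) -> is_sup spec D t.
Proof.
  intros Ht y; apply eq_lower; intros c H.
  - apply fle_subX; intros x d Hd Hx; lower_hyps Hd.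
    apply fle_spec_order; intros V HV d' Hd' HVx; lower_hyps Hd'.
    apply (fle_spec_orderE (x := t) HV); [|exact H].
    rewrite <- (Ht V HV). apply (fle_bigjoin x), fmeet_glb; assumption.
  - apply fle_spec_order; intros V HV d Hd HVt; lower_hyps Hd.
    rewrite <- (Ht V HV) in HVt.
    apply (fle_bigjoinE HVt); intros x d' Hd' Hx; lower_hyps Hd'.
    exact (fle_spec_orderE HV (fle_meetl Hx) (fle_subXE H (fle_meetr Hx))).
Qed.

Lemma open_scott_open A : O A -> scott_open spec A.
Proof.
  intro HA; split; [exact (open_upper_set HA)|].
  intros D s HD Hs.
  destruct (proj2 O_sober _ (directed_point_is_point HD)) as [t Ht].
  assert (Est : s = t).
  { pose proof (directed_point_sup Ht) as Hts.
    apply spec_order_T0; apply (is_sup_le_sup (spec_order_refl O)) with (D := D); assumption. }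
  subst t; symmetry; exact (Ht A HA).
Qed.

(* The point [V |-> sub_X(B, V)] of [O(X)] is [[y]]. *)
Definition represents B (y : X) : Prop := forall V, O V -> subX B V = V y.

Lemma super_compact_represented B : super_compact O B -> exists y, represents B y.
Proof.
  intros [Hne Hjoin]. apply (proj2 O_sober (fun V => subX B V)). split; [|split].
  - intros V W _ _; apply subX_meet.
  - exact Hjoin.
  - intro a; apply subX_const, Hne.
Qed.

Lemma represents_le B y z c : represents B y -> fle c (B z) -> fle c (spec y z).
Proof.
  intros HB Hz. apply fle_spec_order; intros V HV d Hd HVy; lower_hyps Hd.
  rewrite <- (HB V HV) in HVy. exact (fle_subXE HVy Hz).
Qed.

Lemma interior_le B x c : fle c (interior O B x) -> fle c (B x).
Proof.
  intro H; apply (fle_bigjoinE H); intros V d _ HV.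
  exact (fle_trans HV (proj2 (proj2_sig V) x)).
Qed.

Hypothesis O_top : is_Ltopology O.
Hypothesis O_lsc : locally_super_compact O.

Lemma interior_open B : O (interior O B).
Proof. apply (proj1 (proj2 O_top)); intro V; exact (proj1 (proj2_sig V)). Qed.

Lemma locally_super_compactE V x c t : O V -> fle c (V x) ->
  (forall B d, super_compact O B -> fle d c -> fle d (subX B V) ->
     fle d (interior O B x) -> fle d t) ->
  fle c t.
Proof.
  intros HV Hx K. rewrite (O_lsc HV) in Hx.
  apply (fle_bigjoinE Hx); intros [B HB] d Hd HBx.
  exact (K B d HB Hd (fle_meetl HBx) (fle_meetr HBx)).
Qed.

Definition approx (y : X) : X -> L :=
  Ljoin (fun B : {B | super_compact O B /\ represents B y} => interior O (proj1_sig B)).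

Lemma approx_open y : O (approx y).
Proof. apply (proj1 (proj2 O_top)); intros B; apply interior_open. Qed.

Lemma approx_le y x c : fle c (approx y x) -> fle c (spec y x).
Proof.
  intro H; apply (fle_bigjoinE H); intros B d _ Hx.
  exact (represents_le (proj2 (proj2_sig B)) (interior_le Hx)).
Qed.

Lemma fle_approx B y x c :
  super_compact O B -> represents B y -> fle c (interior O B x) -> fle c (approx y x).
Proof. intros HBc HB Hx; exact (fle_bigjoin (exist _ B (conj HBc HB)) Hx). Qed.

Lemma approx_directed x : directed spec (fun y => approx y x).
Proof.
  destruct O_top as [O_meet [_ O_const]]. split.
  - apply eq_lower; intros c H; [apply fle_top|].
    apply (locally_super_compactE (V := const (ftop L)) (x := x) (O_const _) H).
    intros B d HBc _ _ HBx. destruct (super_compact_represented HBc) as [y HB].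
    exact (fle_bigjoin y (fle_approx HBc HB HBx)).
  - intros y1 y2; apply fle_lower; intros c H.
    pose proof (O_meet _ _ (approx_open y1) (approx_open y2)) as HV.
    apply (locally_super_compactE HV H); intros B d HBc _ HBV HBx.
    destruct (super_compact_represented HBc) as [y HB].
    rewrite (HB _ HV) in HBV.
    apply (fle_bigjoin y), fmeet_glb; [exact (fle_approx HBc HB HBx) | apply fmeet_glb].
    + exact (approx_le (fle_meetl HBV)).
    + exact (approx_le (fle_meetr HBV)).
Qed.

Lemma approx_sup x : is_sup spec (fun y => approx y x) x.
Proof.
  intro w; apply eq_lower; intros c H.
  - apply fle_subX; intros y d Hd Hy; lower_hyps Hd.
    exact (fle_trans_e (spec_order_trans O) (approx_le Hy) H).
  - apply fle_spec_order; intros V HV d Hd HVx; lower_hyps Hd.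
    apply (locally_super_compactE HV HVx); intros B d' HBc Hd' HBV HBx; lower_hyps Hd'.
    destruct (super_compact_represented HBc) as [y HB].
    rewrite (HB V HV) in HBV.
    exact (fle_spec_orderE HV HBV (fle_subXE H (fle_approx HBc HB HBx))).
Qed.

Lemma scott_open_open A : scott_open spec A -> O A.
Proof.
  intros [_ A_scott]. destruct O_top as [O_meet [O_join O_const]].
  replace A with (Ljoin (fun y => Lmeet (const (A y)) (approx y))).
  - apply O_join; intro y; apply O_meet; [apply O_const | apply approx_open].
  - extensionality x; symmetry; exact (A_scott _ _ (approx_directed x) (approx_sup x)).
Qed.
End SoberSpace.

Theorem theorem4p7 (L : frame) :
  (forall (X : Type) (O : (X -> L) -> Prop),
     is_Ltopology O -> locally_super_compact O -> L_sober O ->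
     forall A : X -> L, scott_open (spec_order O) A <-> O A) /\
  (forall (P : Type) (e : P -> P -> L),
     continuous_L_dcpo e ->
     forall x y : P, spec_order (scott_open e) x y = e x y).
Proof.
  split.
  - intros X O O_top O_lsc O_sober A; split.
    + exact (scott_open_open O_sober O_top O_lsc (A := A)).
    + exact (open_scott_open O_sober (A := A)).
  - intros P e [[[e_refl [e_trans _]] _] e_cont] x y.
    exact (spec_order_scott e_refl e_trans (fun z => proj1 (e_cont z))
             (fun z => proj2 (e_cont z)) x y).
Qed.
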